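(* Let $n,k_1,k_2$ be nonnegative integers with $k_1+k_2\le n$ and $\ell=n-k_1-k_2$. If $G\in\mathcal{T}$, then there is a matrix $G'\in\mathcal{U}$ such that the $\mathbb{Z}_4$-codes with generator matrices $G$ and $G'$ are equivalent.
   Context: $\mathbb{Z}_4=\{0,1,2,3\}$ is the ring of integers modulo $4$; a $\mathbb{Z}_4$-code of length $n$ is a submodule of $\mathbb{Z}_4^n$, and two codes are equivalent if one is obtained from the other by permuting coordinates and changing the signs of some coordinates. Order $\mathbb{Z}_4$ by $0<1<2<3$ and order vectors lexicographically. Let $M_{m\times n}(R)$ denote the set of $m\times n$ matrices with entries in $R$. For $T\subset M_{m\times n}(\mathbb{Z}_4)$ let $P_{row}(T)$ be the set of matrices in $T$ whose rows $a_1,\dots,a_m$ satisfy $a_i\le a_j$ whenever $i\le j$. For $(0,1)$-matrices $A$ ($k_1\times k_2$), $D$ ($k_2\times\ell$) and a $\mathbb{Z}_4$-matrix $B$ ($k_1\times\ell$), let $G(A,B,D)=\begin{pmatrix} I_{k_1} & A & B\\ O & 2I_{k_2} & 2D\end{pmatrix}$. Let $\mathcal{S}=\{G(A,B,D)\mid A\in M_{k_1\times k_2}(\{0,1\}),\ B\in M_{k_1\times\ell}(\mathbb{Z}_4),\ D\in M_{k_2\times\ell}(\{0,1\})\}$, $\mathcal{T}=\{G(A,B,D)\in\mathcal{S}\mid A\in P_{row}(M_{k_1\times k_2}(\{0,1\}))\}$. Let $\mathcal{B}$ be the set consisting of all $k_1\times\ell$ matrices with entries in $\{0,2\}$ together with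 all $k_1\times\ell$ $\mathbb{Z}_4$-matrices $B$ such that, for the smallest $i\in\{1,\dots,k_1\}$ for which the $i$-th row of $B$ contains an entry not in $\{0,2\}$, the $i$-th row of $B$ has all entries in $\{0,1,2\}$. Let $\mathcal{U}=\{G(A,B,D)\in\mathcal{T}\mid B\in\mathcal{B}\}$. *)

From HB Require Import structures.
From mathcomp Require Import all_boot all_order all_fingroup all_algebra.
Set Implicit Arguments. Unset Strict Implicit. Unset Printing Implicit Defensive.
Import GRing.Theory.
Local Open Scope ring_scope.

Notation Z4 := 'Z_4.

Definition lex_le (m : nat) (u v : 'rV[Z4]_m) : Prop :=
  u = v \/
  exists j : 'I_m, (forall j' : 'I_m, (j' < j)%N -> u ord0 j' = v ord0 j') /\
                   (val (u ord0 j) < val (v ord0 j))%N.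

Definition row_sorted (r c : nat) (A : 'M[Z4]_(r, c)) : Prop :=
  forall i j : 'I_r, (i <= j)%N -> lex_le (row i A) (row j A).

Definition binary_mx (r c : nat) (A : 'M[Z4]_(r, c)) : Prop :=
  forall i j, A i j = 0 \/ A i j = 1.

Definition in02 (x : Z4) : Prop := x = 0 \/ x = 2%:R.

Definition inB (k1 l : nat) (B : 'M[Z4]_(k1, l)) : Prop :=
  (forall i j, in02 (B i j)) \/
  exists i : 'I_k1,
    (exists j, ~ in02 (B i j)) /\
    (forall i' : 'I_k1, (i' < i)%N -> forall j, in02 (B i' j)) /\
    (forall j, B i j = 0 \/ B i j = 1 \/ B i j = 2%:R).

Definition Gmat (k1 k2 l : nat) (A : 'M[Z4]_(k1, k2)) (B : 'M[Z4]_(k1, l))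
  (D : 'M[Z4]_(k2, l)) : 'M[Z4]_(k1 + k2, k1 + (k2 + l)) :=
  block_mx 1%:M (row_mx A B) 0 (row_mx (2%:R *: 1%:M) (2%:R *: D)).

Definition inT (k1 k2 l : nat) (G : 'M[Z4]_(k1 + k2, k1 + (k2 + l))) : Prop :=
  exists A B D, binary_mx A /\ row_sorted A /\ binary_mx D /\ G = @Gmat k1 k2 l A B D.

Definition inU (k1 k2 l : nat) (G : 'M[Z4]_(k1 + k2, k1 + (k2 + l))) : Prop :=
  exists A B D, binary_mx A /\ row_sorted A /\ binary_mx D /\ inB B /\
    G = @Gmat k1 k2 l A B D.

Definition code (m n : nat) (G : 'M[Z4]_(m, n)) : {set 'rV[Z4]_n} :=
  [set c | [exists x : 'rV[Z4]_m, c == x *m G]].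

Definition monomial_map (n : nat) (s : 'S_n) (e : 'I_n -> bool) (c : 'rV[Z4]_n)
  : 'rV[Z4]_n := \row_j ((if e j then -1 else 1) * c ord0 (s j)).

Definition equiv_codes (n : nat) (C C' : {set 'rV[Z4]_n}) : Prop :=
  exists (s : 'S_n) (e : 'I_n -> bool), C' = [set monomial_map s e c | c in C].

(* Negating a column of a generator matrix is a monomial map, so it yields an
   equivalent code. Negating columns of the last block leaves the rows
   [O 2I 2D] unchanged because [-2 = 2] in Z_4, and only affects [B]. If some
   row of [B] has an odd entry, take the first such row [i] and negate exactly
   the columns where row [i] has a 3: parity is preserved, so the rows above
   [i] stay in {0,2}, while row [i] becomes a row over {0,1,2}. *)

From mathcomp Require Import all_boot all_order all_fingroup all_algebra.
Set Implicit Arguments. Unset Strict Implicit. Unset Printing Implicit Defensive.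
Import GRing.Theory.
Local Open Scope ring_scope.

Lemma Z4_cases (x : Z4) : [\/ x = 0, x = 1, x = 2%:R | x = 3%:R].
Proof.
case: x => [[|[|[|[|m]]]] lt_x4] //.
- by constructor 1; apply/val_inj.
- by constructor 2; apply/val_inj.
- by constructor 3; apply/val_inj.
- by constructor 4; apply/val_inj.
Qed.

Definition sign (b : bool) : Z4 := if b then -1 else 1.

Definition sign_mx n (e : 'rV[bool]_n) : 'M[Z4]_n := diag_mx (map_mx sign e).

Lemma mul_sign_mxE m n (A : 'M[Z4]_(m, n)) (e : 'rV_n) i j :
  (A *m sign_mx e) i j = A i j * sign (e 0 j).
Proof. by rewrite mul_mx_diag !mxE. Qed.

Lemma sign_mx_row n1 n2 (e1 : 'rV_n1) (e2 : 'rV_n2) :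
  sign_mx (row_mx e1 e2) = block_mx (sign_mx e1) 0 0 (sign_mx e2).
Proof. by rewrite /sign_mx map_row_mx diag_mx_row. Qed.

Lemma sign_mx_false n : sign_mx (const_mx false : 'rV_n) = 1%:M.
Proof. by rewrite /sign_mx map_const_mx diag_const_mx. Qed.

Lemma monomial_map1 n (e : 'rV[bool]_n) (c : 'rV[Z4]_n) :
  monomial_map 1%g (e 0) c = c *m sign_mx e.
Proof.
apply/matrixP => i j; rewrite mul_sign_mxE !mxE perm1 (ord1 i) mulrC.
by case: (e 0 j).
Qed.

Lemma code_mulmx m n p (G : 'M[Z4]_(m, n)) (M : 'M[Z4]_(n, p)) :
  code (G *m M) = [set c *m M | c in code G].
Proof.
apply/setP => c; rewrite inE; apply/existsP/imsetP.
- case=> x /eqP ->; exists (x *m G); last by rewrite mulmxA.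
  by rewrite inE; apply/existsP; exists x.
- case=> _ /[!inE] /existsP [x /eqP ->] ->; exists x.
  by rewrite mulmxA.
Qed.

Lemma equiv_codes_mul_sign_mx m n (G : 'M[Z4]_(m, n)) (e : 'rV_n) :
  equiv_codes (code G) (code (G *m sign_mx e)).
Proof.
exists 1%g, (e 0); rewrite code_mulmx.
by apply: eq_imset => c; rewrite monomial_map1.
Qed.

Lemma scale2_mul_sign_mx m n (D : 'M[Z4]_(m, n)) (e : 'rV_n) :
  (2%:R *: D) *m sign_mx e = 2%:R *: D.
Proof.
apply/matrixP => i j; rewrite mul_sign_mxE !mxE.
by case: (e 0 j); case: (Z4_cases (D i j)) => ->; apply/eqP.
Qed.

Lemma Gmat_mul_sign_mx k1 k2 l (A : 'M[Z4]_(k1, k2)) B D (e : 'rV_l) :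
  Gmat A B D *m sign_mx (row_mx (const_mx false) (row_mx (const_mx false) e))
  = Gmat A (B *m sign_mx e) D.
Proof.
rewrite /Gmat !sign_mx_row !sign_mx_false mulmx_block.
rewrite !mulmx0 !mul0mx !addr0 !add0r mulmx1 !mul_row_block.
by rewrite !mulmx0 !addr0 !add0r !mulmx1 scale2_mul_sign_mx.
Qed.

Lemma in02E (x : Z4) : in02 x <-> ~~ odd x.
Proof. by rewrite /in02; split; case: (Z4_cases x) => -> //; intuition. Qed.

Lemma odd_mul_sign (x : Z4) b : odd (x * sign b)%R = odd x.
Proof. by case: b; case: (Z4_cases x) => ->. Qed.

Lemma mul_sign_eq3 (x : Z4) :
  let y := x * sign (x == 3%:R) in y = 0 \/ y = 1 \/ y = 2%:R.
Proof.
by case: (Z4_cases x) => ->; [left | right; left | right; right | right; left]; apply/eqP.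
Qed.

Lemma inB_first_odd_row k1 l (B : 'M[Z4]_(k1, l)) (i : 'I_k1) :
  (exists j, odd (B i j)) ->
  (forall i' : 'I_k1, (i' < i)%N -> forall j, ~~ odd (B i' j)) ->
  (forall j, B i j = 0 \/ B i j = 1 \/ B i j = 2%:R) ->
  inB B.
Proof.
move=> [j odd_ij] even_above row_i; right; exists i; split; [|split] => //.
- by exists j; move/in02E; rewrite odd_ij.
- by move=> i' lt_i'i j'; apply/in02E; apply: even_above.
Qed.

Lemma exists_sign_mx_inB k1 l (B : 'M[Z4]_(k1, l)) :
  exists e : 'rV_l, inB (B *m sign_mx e).
Proof.
pose odd_row i := [exists j, odd (B i j)].
have [[i1 odd_i1] | all_even] := altP (@existsP _ odd_row); last first.
  exists (const_mx false); left => i j.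
  apply/in02E; rewrite mul_sign_mxE odd_mul_sign; apply: contra all_even => odd_ij.
  by apply/existsP; exists i; apply/existsP; exists j.
case: (arg_minnP (P := odd_row) val odd_i1) => i /existsP odd_i min_i.
exists (\row_j (B i j == 3%:R)); apply: (inB_first_odd_row (i := i)).
- by case: odd_i => j odd_ij; exists j; rewrite mul_sign_mxE odd_mul_sign.
- move=> i' lt_i'i j; rewrite mul_sign_mxE odd_mul_sign.
  apply: contraL lt_i'i => odd_i'j; rewrite -leqNgt min_i //.
  by apply/existsP; exists j.
- by move=> j; rewrite mul_sign_mxE mxE; apply: mul_sign_eq3.
Qed.

Theorem mainTheorem10 (n k1 k2 : nat) (Hn : (k1 + k2 <= n)%N)
  (G : 'M[Z4]_(k1 + k2, k1 + (k2 + (n - k1 - k2)))) :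
  inT G ->
  exists G' : 'M[Z4]_(k1 + k2, k1 + (k2 + (n - k1 - k2))),
    inU G' /\ equiv_codes (code G) (code G').
Proof.
move=> [A [B [D [binA [sortedA [binD ->]]]]]].
have [e inB_Be] := exists_sign_mx_inB B.
exists (Gmat A (B *m sign_mx e) D); split; first by exists A, (B *m sign_mx e), D.
rewrite -Gmat_mul_sign_mx; exact: equiv_codes_mul_sign_mx.
Qed.
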